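(* Let $A,B\in\mathcal{M}_n$, let $\psi\colon H^*(M(A);\mathbb{Z})\to H^*(M(B);\mathbb{Z})$ be a graded ring isomorphism, and denote also by $\psi$ its rationalization $H^*(M(A);\mathbb{Q})\to H^*(M(B);\mathbb{Q})$. Let $\sigma$ be a permutation of $\{1,\dots,n\}$ and $q_1,\dots,q_n$ nonzero rationals with $\psi(y^A_j)=q_jy^B_{\sigma(j)}$ for all $j$ (such data exist). Then $q_j\in\{\pm\tfrac12,\pm1,\pm2\}$ for every $j$, and (1) $q_j\in\{\pm\tfrac12\}$ if and only if $\alpha^A_j\not\equiv0\pmod2$ and $\alpha^B_{\sigma(j)}\equiv0\pmod 2$; (2) $q_j\in\{\pm2\}$ if and only if $\alpha^A_j\equiv0\pmod2$ and $\alpha^B_{\sigma(j)}\not\equiv0\pmod2$. Moreover, if $q_j=\pm1$ for all $j$, then $\psi(p(M(A)))=p(M(B))$, where $p$ denotes the total Pontrjagin class.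
   Context: Let $\mathcal{M}_n$ be the set of integral strictly upper triangular $n\times n$ matrices $A=(A^i_j)$ ($A^i_j$ is the $(i,j)$ entry, and $A^i_j=0$ for $i\ge j$). For $A\in\mathcal{M}_n$, $M(A)$ denotes the Bott manifold obtained as the quotient of $(S^3)^n$ ($S^3\subset\mathbb{C}^2$ the unit sphere) by the free $(S^1)^n$-action $(g_1,\dots,g_n)\cdot((z_1,w_1),\dots,(z_n,w_n))=\big(((\prod_{k<j}g_k^{-A^k_j})g_jz_j,\ g_jw_j)\big)_{j=1}^n$. Let $x^A_j\in H^2(M(A);\mathbb{Z})$ be the first Chern class of the line bundle obtained as the quotient of $(S^3)^n\times\mathbb{C}$ where $g$ acts on the $\mathbb{C}$-factor by $g_j^{-1}$. Put $\alpha^A_j=\sum_{i<j}A^i_jx^A_i\in H^2(M(A);\mathbb{Z})$; congruences mod $2$ are taken in $H^2(M(A);\mathbb{Z})$ with basis $x^A_1,\dots,x^A_n$. Then $H^*(M(A);\mathbb{Z})=\mathbb{Z}[x^A_1,\dots,x^A_n]/((x^A_j)^2-\alpha^A_jx^A_j\mid j=1,\dots,n)$. Define $y^A_j=x^A_j-\tfrac12\alpha^A_j\in H^2(M(A);\mathbb{Q})$. The same notation is used for $B$. *)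

From HB Require Import structures.
From mathcomp Require Import all_boot all_order all_algebra.
From mathcomp Require Import perm.
From mathcomp Require Import mpoly.
From Stdlib Require Import ClassicalEpsilon.

Set Implicit Arguments.
Unset Strict Implicit.
Unset Printing Implicit Defensive.

Import Order.TTheory GRing.Theory Num.Theory.
Local Open Scope ring_scope.
Local Open Scope quotient_scope.

Definition strict_upper (n : nat) (A : 'M[int]_n) : Prop :=
  forall i j : 'I_n, (j <= i)%N -> A i j = 0.

Section Bott.
Variables (R : comNzRingType) (n : nat).

Definition alpha (A : 'M[int]_n) (j : 'I_n) : {mpoly R[n]} :=
  \sum_(i < n | (i < j)%N) (A i j)%:~R *: 'X_i.

Definition bott_rel (A : 'M[int]_n) (j : 'I_n) : {mpoly R[n]} :=
  'X_j ^+ 2 - alpha A j * 'X_j.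

Definition in_bott_ideal (A : 'M[int]_n) (p : {mpoly R[n]}) : Prop :=
  exists c : 'I_n -> {mpoly R[n]}, p = \sum_(j < n) c j * bott_rel A j.

Definition bott_ideal (A : 'M[int]_n) : pred {mpoly R[n]} :=
  fun p => if excluded_middle_informative (in_bott_ideal A p) then true else false.

Lemma bott_idealP A p : reflect (in_bott_ideal A p) (bott_ideal A p).
Proof.
rewrite /bott_ideal; case: excluded_middle_informative => h.
  by apply: ReflectT.
by apply: ReflectF.
Qed.

Lemma bott_ideal_closed A : idealr_closed (bott_ideal A).
Proof.
split.
- apply/bott_idealP; exists (fun _ => 0).
  by rewrite big1 // => j _; rewrite mul0r.
- apply/negP => /bott_idealP [c hc].
  have := congr1 (meval (fun _ : 'I_n => (0 : R))) hc.
  rewrite meval1 (big_morph _ (mevalD _) (meval0 _)) big1.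
    by move/eqP; rewrite oner_eq0.
  move=> j _; rewrite mevalM /bott_rel mevalB expr2 !mevalM mevalXU.
  by rewrite !mulr0 subrr mulr0.
- move=> a u v /bott_idealP [cu hu] /bott_idealP [cv hv].
  apply/bott_idealP; exists (fun j => a * cu j + cv j).
  rewrite hu hv mulr_sumr -big_split /=; apply: eq_bigr => j _.
  by rewrite mulrDl mulrA.
Qed.

HB.instance Definition _ (A : 'M[int]_n) :=
  isIdealr.Build {mpoly R[n]} (bott_ideal A) (bott_ideal_closed A).

(* H^*(M(A); R) = R[x_1..x_n] / (x_j^2 - alpha_j x_j) *)
Definition Hcoh (A : 'M[int]_n) := {ideal_quot (bott_ideal A : {pred {mpoly R[n]}})}.

Definition cls (A : 'M[int]_n) (p : {mpoly R[n]}) : Hcoh A :=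
  \pi_(Hcoh A) p.

(* h lies in H^{2k}: it has a representative homogeneous of degree k
   (the generators x_j have cohomological degree 2, odd cohomology is 0) *)
Definition in_Hdeg (A : 'M[int]_n) (k : nat) (h : Hcoh A) : Prop :=
  exists p : {mpoly R[n]}, p \is k.-homog /\ cls A p = h.

End Bott.

Arguments cls {R n} A p.
Arguments alpha {R n} A j.

Definition graded_ring_iso (R : comNzRingType) (n : nat) (A B : 'M[int]_n)
    (psi : {rmorphism Hcoh R A -> Hcoh R B}) : Prop :=
  bijective psi /\
  forall (k : nat) (h : Hcoh R A), in_Hdeg k h -> in_Hdeg k (psi h).

Definition rationalize (n : nat) (A : 'M[int]_n) (h : Hcoh int A) : Hcoh rat A :=
  cls A (map_mpoly (fun z : int => z%:~R : rat) (repr h)).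

Definition ypoly (n : nat) (A : 'M[int]_n) (j : 'I_n) : {mpoly rat[n]} :=
  'X_j - (2%:R)^-1 *: alpha A j.

Definition alpha_even (n : nat) (A : 'M[int]_n) (j : 'I_n) : Prop :=
  forall i : 'I_n, (i < j)%N -> (2 %| A i j)%Z.

Definition pontrjagin (n : nat) (A : 'M[int]_n) : Hcoh int A :=
  cls A (\prod_(j < n) (1 + alpha A j ^+ 2)).

(* In degree two everything happens over the integers.  The class [2 y_j = 2 x_j - alpha_j]
   is integral, and its coordinate on [x_j] is 2, so its content (the gcd of its coordinates)
   is 2 when [alpha_j] is even and 1 otherwise.  A graded ring isomorphism restricts to a
   Z-linear isomorphism of H^2, so it preserves contents; as it maps [2 y^A_j] to
   [q_j * 2 y^B_(sigma j)], |q_j| is the ratio of the two contents, which settles (1), (2) and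
   the list of possible values.  Finally [p = prod_j (1 + alpha_j^2)] and [alpha_j^2 = (2 y_j)^2]
   in cohomology, so when every [q_j = +-1] each factor is mapped to the corresponding one. *)

From HB Require Import structures.
From mathcomp Require Import all_boot all_order all_algebra.
From mathcomp Require Import perm mpoly ring_quotient.
From mathcomp Require Import ring zify.

Set Implicit Arguments.
Unset Strict Implicit.
Unset Printing Implicit Defensive.

Import GRing.Theory Num.Theory.
Local Open Scope ring_scope.
Local Open Scope quotient_scope.

Definition dvdz_all n (d : int) (v : 'I_n -> int) : bool := [forall i, (d %| v i)%Z].

(* The content (gcd of the entries) of [v], as soon as some entry of [v] is 2. *)
Definition two_content n (v : 'I_n -> int) : int := if dvdz_all 2 v then 2 else 1.

Lemma dvdz_allP n (d : int) (v : 'I_n -> int) :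
  reflect (exists t : 'I_n -> int, forall i, v i = d * t i) (dvdz_all d v).
Proof.
apply: (iffP forallP) => [d_v | [t v_dt] i]; last by rewrite v_dt dvdz_mulr.
by exists (fun i => (v i %/ d)%Z) => i; rewrite mulrC divzK.
Qed.

Lemma dvdz2_cases (m : int) : (m %| 2)%Z -> [\/ m = 1, m = -1, m = 2 | m = -2].
Proof.
rewrite dvdzE => m_2.
have m_le2 : (`|m| <= 2)%N by exact: dvdn_leq.
have m_neq0 : `|m|%N != 0%N by apply: contraTneq m_2 => ->.
have : [|| m == 1, m == -1, m == 2 | m == -2] by lia.
by case/or4P => /eqP ->; [apply: Or41 | apply: Or42 | apply: Or43 | apply: Or44].
Qed.

Lemma dvdz_mul_odd (d m x : int) : ~~ (2 %| x)%Z ->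
  (d %| m * 2)%Z -> (d %| m * x)%Z -> (d %| m)%Z.
Proof.
move=> x_odd d_m2 d_mx.
have gcd_2x : gcdz 2 x = 1.
  have : coprime 2 `|x| by rewrite coprime2n; move: x_odd; rewrite dvdzE dvdn2 negbK.
  by rewrite /gcdz => /eqP ->.
have : (d %| `|m|%:Z)%Z by rewrite -[X in (_ %| X)%Z]mulr1 -gcd_2x mulz_gcdr dvdz_gcd d_m2.
by rewrite !dvdzE.
Qed.

Lemma scaled_two_content n (v u : 'I_n -> int) (q : rat) (k : 'I_n) :
  v k = 2 -> (forall i, (u i)%:~R = q * (v i)%:~R :> rat) ->
  exists m : int, q = m%:~R / (two_content v)%:~R /\ forall d, dvdz_all d u = (d %| m)%Z.
Proof.
move=> vk2 u_qv.
have uk : (u k)%:~R = q * 2 :> rat by rewrite u_qv vk2.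
rewrite /two_content; case: ifPn => [/forallP v_even | /forallPn [i0 v_i0_odd]].
- exists (u k); split; first by rewrite uk mulfK.
  have u_mul i : u i = u k * (v i %/ 2)%Z.
    by apply: (@intr_inj rat); rewrite u_qv -{1}(divzK (v_even i)) !rmorphM /= uk; ring.
  by move=> d; apply/forallP/idP => [/(_ k) // | d_uk i]; rewrite u_mul dvdz_mulr.
- have u_i0 : 2 * u i0 = u k * v i0.
    by apply: (@intr_inj rat); rewrite !rmorphM /= u_qv uk; ring.
  have two_uk : (2 %| u k)%Z.
    by apply: (dvdz_mul_odd v_i0_odd); [exact: dvdz_mull | rewrite -u_i0 dvdz_mulr].
  set m := (u k %/ 2)%Z; have uk_m : u k = m * 2 by rewrite divzK.
  have q_m : q = m%:~R.
    by apply: (@mulIf _ 2) => //=; rewrite -uk uk_m rmorphM.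
  exists m; split; first by rewrite q_m divr1.
  have u_mul i : u i = m * v i by apply: (@intr_inj rat); rewrite u_qv rmorphM q_m.
  move=> d; apply/forallP/idP => [d_u | d_m i]; last by rewrite u_mul dvdz_mulr.
  by apply: (dvdz_mul_odd v_i0_odd); rewrite -?u_mul -?uk_m; apply: d_u.
Qed.

Lemma two_content_of_divisors n (w : 'I_n -> int) (k : 'I_n) (m : int) :
  w k = 2 -> (forall d, dvdz_all d w = (d %| m)%Z) ->
  m = two_content w \/ m = - two_content w.
Proof.
move=> wk2 w_m.
have : (m %| w k)%Z by move: (w_m m); rewrite dvdzz => /forallP.
rewrite wk2 /two_content w_m => /dvdz2_cases.
by case=> ->; [left | right | left | right].
Qed.

Lemma two_content_ratio n (wA wB u : 'I_n -> int) (q : rat) (j k : 'I_n) :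
  wA j = 2 -> wB k = 2 -> (forall i, (u i)%:~R = q * (wB i)%:~R :> rat) ->
  (forall d, dvdz_all d wA = dvdz_all d u) ->
  q = (two_content wA)%:~R / (two_content wB)%:~R \/
  q = - ((two_content wA)%:~R / (two_content wB)%:~R).
Proof.
move=> wAj wBk u_qv wA_u.
have [m [q_m u_m]] := scaled_two_content wBk u_qv.
have [] := two_content_of_divisors wAj (fun d => etrans (wA_u d) (u_m d)) => m_eq.
  by left; rewrite q_m m_eq.
by right; rewrite q_m m_eq rmorphN mulNr.
Qed.

Lemma two_power_ratio_cases (a b : bool) (q : rat) :
  let r := (if a then 2 else 1 : int)%:~R / (if b then 2 else 1 : int)%:~R in
  q = r \/ q = - r ->
  [/\ q \in [:: 2^-1; - 2^-1; 1; -1; 2; -2],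
      (q = 2^-1 \/ q = - 2^-1) <-> ~~ a && b &
      (q = 2 \/ q = -2) <-> a && ~~ b].
Proof.
by case: a b => [] [] /= [] ->; split=> //; apply: (iff_trans (rwP pred2P)).
Qed.

Section BottRing.
Variables (R : comNzRingType) (n : nat) (A : 'M[int]_n).
Implicit Types (p q : {mpoly R[n]}) (c : 'I_n -> R).

HB.instance Definition _ := GRing.RMorphism.copy (@cls R n A) (\pi_(Hcoh R A)).

Definition lin_mpoly (c : 'I_n -> R) : {mpoly R[n]} := \sum_i c i *: 'X_i.

Lemma mpolyX_homog (i : 'I_n) : ('X_i : {mpoly R[n]}) \is 1.-homog.
Proof. by apply/dhomogP => m /mem_msuppXP <-; exact: mdeg1. Qed.

Lemma lin_mpoly_homog c : lin_mpoly c \is 1.-homog.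
Proof. by apply: rpred_sum => i _; apply/dhomogZ/mpolyX_homog. Qed.

Lemma mcoeff_lin_mpoly c i : (lin_mpoly c)@_U_(i) = c i.
Proof.
rewrite raddf_sum (bigD1 i) //= mcoeffZ mcoeffXU eqxx mulr1 big1 ?addr0 //.
by move=> k /negbTE k_i; rewrite mcoeffZ mcoeffXU k_i mulr0.
Qed.

Lemma homog1_lin_mpoly p : p \is 1.-homog -> p = lin_mpoly (fun i => p@_U_(i)).
Proof.
move=> p_homog; apply/mpolyP => m.
have [/mdeg1P [i /eqP ->] | m_deg] := boolP (mdeg m == 1%N).
  by rewrite mcoeff_lin_mpoly.
by rewrite !(dhomog_nemf_coeff _ m_deg) ?lin_mpoly_homog.
Qed.

Lemma eq_lin_mpoly c c' : c =1 c' -> lin_mpoly c = lin_mpoly c'.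
Proof. by move=> c_c'; apply: eq_bigr => i _; rewrite c_c'. Qed.

Lemma lin_mpolyZ a c : lin_mpoly (fun i => a * c i) = a *: lin_mpoly c.
Proof. by rewrite scaler_sumr; apply: eq_bigr => i _; rewrite scalerA. Qed.

Lemma alpha_homog j : (alpha A j : {mpoly R[n]}) \is 1.-homog.
Proof. by apply: rpred_sum => i _; apply/dhomogZ/mpolyX_homog. Qed.

Lemma bott_rel_homog j : bott_rel R A j \is 2.-homog.
Proof.
apply: rpredB; first exact: (dhomogMn 2 (mpolyX_homog j)).
exact: dhomogM (alpha_homog j) (mpolyX_homog j).
Qed.

Lemma pihomog_bott_ideal d p : in_bott_ideal A p -> (d < 2)%N -> pihomog mdeg d p = 0.
Proof.
move=> [c ->] d_lt2; rewrite raddf_sum big1 // => j _.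
rewrite (pihomog_partitionE (leqnn (msize (c j)))) mulr_suml raddf_sum big1 //= => e _.
apply: (@pihomog_ne0 _ _ _ (e + 2)%N); last exact: dhomogM (pihomogP _ _ _) (bott_rel_homog j).
by rewrite eq_sym neq_ltn (leq_trans d_lt2) ?leq_addl.
Qed.

Lemma cls_eqP p q : cls A p = cls A q <-> in_bott_ideal A (p - q).
Proof.
have := Quotient.idealrBE (bott_ideal A : {pred {mpoly R[n]}}) p q.
rewrite /cls /Hcoh => pi_eq.
split=> [pq_eq | /(bott_idealP A) pq_in]; last by apply/eqP; rewrite -pi_eq.
by apply/(bott_idealP A); move: pi_eq; rewrite pq_eq eqxx.
Qed.

Lemma cls_lin_mpoly_inj c c' : cls A (lin_mpoly c) = cls A (lin_mpoly c') -> c =1 c'.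
Proof.
move=> /cls_eqP /(@pihomog_bott_ideal 1) /(_ isT).
rewrite pihomog_dE ?rpredB ?lin_mpoly_homog // => lin_eq i.
by apply/eqP; rewrite -subr_eq0 -(mcoeff0 _ U_(i)) -lin_eq mcoeffB !mcoeff_lin_mpoly.
Qed.

Lemma cls_homog1 h : in_Hdeg 1 h -> exists c, h = cls A (lin_mpoly c).
Proof. by move=> [p [/homog1_lin_mpoly p_lin <-]]; exists (fun i => p@_U_(i)); rewrite -p_lin. Qed.

(* Independent of the representative ([deg1_part_cls]) since the relations are quadratic. *)
Definition deg1_part (h : Hcoh R A) : {mpoly R[n]} := pihomog mdeg 1 (repr h).

Lemma deg1_part_cls p : deg1_part (cls A p) = pihomog mdeg 1 p.
Proof.
have /cls_eqP /(@pihomog_bott_ideal 1) /(_ isT) : cls A (repr (cls A p)) = cls A p.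
  by rewrite /cls reprK.
by rewrite pihomogB => /eqP; rewrite subr_eq0 => /eqP.
Qed.

Lemma deg1_partD : {morph deg1_part : x y / x + y}.
Proof.
move=> x y; rewrite -[x]reprK -[y]reprK -!/(cls A _) -rmorphD.
by rewrite !deg1_part_cls pihomogD.
Qed.

Lemma deg1_part0 : deg1_part 0 = 0.
Proof. by rewrite -(rmorph0 (cls A)) deg1_part_cls pihomog0. Qed.

Lemma deg1_part_homog d h : in_Hdeg d h -> d != 1%N -> deg1_part h = 0.
Proof. by move=> [p [p_homog <-]] d_neq1; rewrite deg1_part_cls (pihomog_ne0 d_neq1). Qed.

End BottRing.

Section GradedIso.
Variables (R : comNzRingType) (n : nat) (A B : 'M[int]_n).
Variables (psi : {rmorphism Hcoh R A -> Hcoh R B}) (psi_iso : graded_ring_iso psi).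
Implicit Types (c : 'I_n -> R).

Lemma graded_iso_lin c : exists c', psi (cls A (lin_mpoly c)) = cls B (lin_mpoly c').
Proof.
apply: cls_homog1; apply: psi_iso.2.
by exists (lin_mpoly c); split=> //; apply: lin_mpoly_homog.
Qed.

(* Only the degree-one component of a preimage contributes to the linear part of the image. *)
Lemma graded_iso_lin_surj c' : exists c, psi (cls A (lin_mpoly c)) = cls B (lin_mpoly c').
Proof.
have [psi_inv _ psiK] := psi_iso.1.
set p := repr (psi_inv (cls B (lin_mpoly c'))).
have psi_p : psi (cls A p) = cls B (lin_mpoly c') by rewrite /cls reprK psiK.
have [c psi_p1] := graded_iso_lin (fun i => (pihomog mdeg 1 p)@_U_(i)).
exists (fun i => (pihomog mdeg 1 p)@_U_(i)); rewrite psi_p1; congr (cls B _).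
have p_sum : p = \sum_(d < maxn (msize p) 2) pihomog mdeg d p.
  by apply: pihomog_partitionE; rewrite leq_maxl.
have one_lt : (1 < maxn (msize p) 2)%N by rewrite leq_max leqnn orbT.
have := congr1 (@deg1_part _ _ B) psi_p.
rewrite p_sum rmorph_sum rmorph_sum (big_morph _ (@deg1_partD _ _ B) (deg1_part0 _ _)).
rewrite (bigD1 (Ordinal one_lt)) //= big1 ?addr0 => [|d d_neq1].
  by rewrite (homog1_lin_mpoly (pihomogP mdeg 1 p)) psi_p1 !deg1_part_cls !pihomog_dE ?lin_mpoly_homog.
apply: (@deg1_part_homog _ _ _ d).
  by apply: psi_iso.2; exists (pihomog mdeg d p); split=> //; apply: pihomogP.
by apply: contraNneq d_neq1 => d1; rewrite -val_eqE /= d1.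
Qed.

End GradedIso.

Lemma lin_mpolyMz n (t : 'I_n -> int) (d : int) : lin_mpoly (fun i => d * t i) = lin_mpoly t *~ d.
Proof. by rewrite lin_mpolyZ -[d in LHS]intz scaler_int. Qed.

Lemma graded_iso_dvdz_all n (A B : 'M[int]_n) (psi : {rmorphism Hcoh int A -> Hcoh int B})
    (c c' : 'I_n -> int) :
  graded_ring_iso psi -> psi (cls A (lin_mpoly c)) = cls B (lin_mpoly c') ->
  forall d, dvdz_all d c = dvdz_all d c'.
Proof.
move=> psi_iso psi_c d; apply/dvdz_allP/dvdz_allP => -[t c_dt].
- have [t' psi_t] := graded_iso_lin psi_iso t.
  exists t'; apply: (@cls_lin_mpoly_inj _ _ B _ (fun i => d * t' i)).
  by rewrite -psi_c (eq_lin_mpoly c_dt) !lin_mpolyMz !rmorphMz psi_t.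
- have [t0 psi_t0] := graded_iso_lin_surj psi_iso t.
  exists t0; apply: (@cls_lin_mpoly_inj _ _ A _ (fun i => d * t0 i)).
  apply: (bij_inj psi_iso.1).
  by rewrite psi_c (eq_lin_mpoly c_dt) !lin_mpolyMz !rmorphMz psi_t0.
Qed.

(* Coefficients of the integral class [2 y_j = 2 x_j - alpha_j]. *)
Definition y2coef n (C : 'M[int]_n) (j i : 'I_n) : int := (j == i)%:R *+ 2 - C i j.

Local Notation mapQ := (map_mpoly (fun z : int => z%:~R : rat)).

Section BottClasses.
Variables (n : nat) (C : 'M[int]_n) (C_upper : strict_upper C).

Lemma alpha_lin_mpoly (R : comNzRingType) j :
  alpha C j = lin_mpoly (fun i => (C i j)%:~R : R).
Proof.
rewrite /alpha /lin_mpoly big_mkcond; apply: eq_bigr => i _.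
by case: ltnP => // j_le_i; rewrite C_upper // scale0r.
Qed.

Lemma lin_mpoly_y2coef j : lin_mpoly (y2coef C j) = 'X_j *+ 2 - alpha C j.
Proof.
have w_homog : ('X_j *+ 2 - alpha C j : {mpoly int[n]}) \is 1.-homog.
  by rewrite rpredB ?rpredMn ?mpolyX_homog ?alpha_homog.
rewrite [RHS](homog1_lin_mpoly w_homog); apply: eq_lin_mpoly => i.
by rewrite mcoeffB mcoeffMn (alpha_lin_mpoly int) mcoeff_lin_mpoly mcoeffXU intz.
Qed.

Lemma y2coef_diag j : y2coef C j j = 2.
Proof. by rewrite /y2coef eqxx C_upper // subr0. Qed.

Lemma y2coef_evenP j : reflect (alpha_even C j) (dvdz_all 2 (y2coef C j)).
Proof.
have dvd2_y2coef i : (2 %| y2coef C j i)%Z = (2 %| C i j)%Z.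
  by rewrite rpredBl ?rpredN // -mulr_natr dvdz_mull.
apply: (iffP forallP) => [even_y i _ | even_alpha i]; first by rewrite -dvd2_y2coef.
by rewrite dvd2_y2coef; case: (ltnP i j) => [/even_alpha // | j_le_i]; rewrite C_upper.
Qed.

(* [(2 x_j - alpha_j)^2 - alpha_j^2 = 4 (x_j^2 - alpha_j x_j)]. *)
Lemma cls_alpha_sqr j : cls C (alpha C j ^+ 2) = cls C (lin_mpoly (y2coef C j)) ^+ 2.
Proof.
rewrite -rmorphXn; apply/cls_eqP; exists (fun k => if k == j then -4 else 0).
rewrite (bigD1 j) //= eqxx big1 ?addr0 => [|k /negbTE ->]; last by rewrite mul0r.
by rewrite lin_mpoly_y2coef /bott_rel; ring.
Qed.

Lemma pontrjagin_y2coef :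
  pontrjagin C = \prod_(j < n) (1 + cls C (lin_mpoly (y2coef C j)) ^+ 2).
Proof.
rewrite /pontrjagin rmorph_prod; apply: eq_bigr => j _.
by rewrite rmorphD rmorph1; congr (_ + _); apply: cls_alpha_sqr.
Qed.

End BottClasses.

Section Rationalization.
Variable n : nat.
Implicit Types (C : 'M[int]_n) (p : {mpoly int[n]}).

Lemma map_alpha C j : mapQ (alpha C j) = alpha C j.
Proof.
rewrite raddf_sum; apply: eq_bigr => i _.
by rewrite /= map_mpolyZ map_mpolyX intz.
Qed.

Lemma map_lin_mpoly (c : 'I_n -> int) : mapQ (lin_mpoly c) = lin_mpoly (fun i => (c i)%:~R).
Proof. by rewrite raddf_sum; apply: eq_bigr => i _; rewrite /= map_mpolyZ map_mpolyX. Qed.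

Lemma map_bott_ideal C p : in_bott_ideal C p -> in_bott_ideal C (mapQ p).
Proof.
move=> [c ->]; exists (fun j => mapQ (c j)); rewrite rmorph_sum; apply: eq_bigr => j _.
by rewrite rmorphM rmorphB rmorphXn rmorphM /= map_alpha map_mpolyX.
Qed.

Lemma rationalize_cls C p : rationalize (cls C p) = cls C (mapQ p).
Proof.
apply/cls_eqP; rewrite -rmorphB; apply: map_bott_ideal; apply/cls_eqP.
by rewrite /cls reprK.
Qed.

Lemma ypoly_twice C j : ypoly C j *+ 2 = mapQ ('X_j *+ 2 - alpha C j).
Proof.
rewrite rmorphB rmorphMn /= map_alpha map_mpolyX /ypoly mulrnBl scalerMnl.
by rewrite (_ : 2^-1 *+ 2 = 1 :> rat) ?scale1r.
Qed.

End Rationalization.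

Section BottIso.
Variables (n : nat) (A B : 'M[int]_n).
Variables (A_upper : strict_upper A) (B_upper : strict_upper B).
Variable psi : {rmorphism Hcoh int A -> Hcoh int B}.

Lemma graded_iso_y2coef (psiQ : {rmorphism Hcoh rat A -> Hcoh rat B}) (sigma : 'S_n) q j :
    graded_ring_iso psi ->
    (forall h, psiQ (rationalize h) = rationalize (psi h)) ->
    psiQ (cls A (ypoly A j)) = cls B (q *: ypoly B (sigma j)) ->
  exists u, psi (cls A (lin_mpoly (y2coef A j))) = cls B (lin_mpoly u) /\
            forall i, (u i)%:~R = q * (y2coef B (sigma j) i)%:~R :> rat.
Proof.
move=> psi_iso psiQ_rat psiQ_y; have [u psi_w] := graded_iso_lin psi_iso (y2coef A j).
exists u; split=> //.
apply: (@cls_lin_mpoly_inj _ _ B _ (fun i => q * (y2coef B (sigma j) i)%:~R)).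
rewrite -map_lin_mpoly -rationalize_cls -psi_w -psiQ_rat rationalize_cls.
rewrite lin_mpoly_y2coef // -ypoly_twice.
rewrite [cls A _]rmorphMn -/(cls A (ypoly A j)) rmorphMn psiQ_y.
by rewrite lin_mpolyZ -map_lin_mpoly lin_mpoly_y2coef // -ypoly_twice -scalerMnr rmorphMn.
Qed.

Lemma graded_iso_ypoly_ratio (psiQ : {rmorphism Hcoh rat A -> Hcoh rat B}) (sigma : 'S_n) q j :
    graded_ring_iso psi ->
    (forall h, psiQ (rationalize h) = rationalize (psi h)) ->
    psiQ (cls A (ypoly A j)) = cls B (q *: ypoly B (sigma j)) ->
  let r := (two_content (y2coef A j))%:~R / (two_content (y2coef B (sigma j)))%:~R in
  q = r \/ q = - r.
Proof.
move=> psi_iso psiQ_rat psiQ_y.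
have [u [psi_w u_q]] := graded_iso_y2coef psi_iso psiQ_rat psiQ_y.
exact: two_content_ratio (y2coef_diag A_upper j) (y2coef_diag B_upper (sigma j)) u_q
  (graded_iso_dvdz_all psi_iso psi_w).
Qed.

Lemma graded_iso_pontrjagin (sigma : 'S_n) :
  (forall j, let w := cls B (lin_mpoly (y2coef B (sigma j))) in
     psi (cls A (lin_mpoly (y2coef A j))) = w \/ psi (cls A (lin_mpoly (y2coef A j))) = - w) ->
  psi (pontrjagin A) = pontrjagin B.
Proof.
move=> psi_w; rewrite (pontrjagin_y2coef A_upper) (pontrjagin_y2coef B_upper) rmorph_prod.
rewrite [RHS](reindex_inj (@perm_inj _ sigma)); apply: eq_bigr => j _.
by rewrite rmorphD rmorph1 rmorphXn; case: (psi_w j) => ->; rewrite ?sqrrN.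
Qed.

End BottIso.

Theorem lemma4p2 (n : nat) (A B : 'M[int]_n)
  (hA : strict_upper A) (hB : strict_upper B)
  (psi : {rmorphism Hcoh int A -> Hcoh int B})
  (hpsi : graded_ring_iso psi)
  (psiQ : {rmorphism Hcoh rat A -> Hcoh rat B})
  (hpsiQ : forall h : Hcoh int A, psiQ (rationalize h) = rationalize (psi h))
  (sigma : 'S_n) (q : 'I_n -> rat)
  (hq0 : forall j, q j != 0)
  (hy : forall j, psiQ (cls A (ypoly A j)) = cls B (q j *: ypoly B (sigma j))) :
  (forall j, q j \in [:: 2^-1; - 2^-1; 1; -1; 2; -2]) /\
  (forall j, (q j = 2^-1 \/ q j = - 2^-1) <->
             (~ alpha_even A j /\ alpha_even B (sigma j))) /\
  (forall j, (q j = 2 \/ q j = -2) <->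
             (alpha_even A j /\ ~ alpha_even B (sigma j))) /\
  ((forall j, q j = 1 \/ q j = -1) -> psi (pontrjagin A) = pontrjagin B).
Proof.
have q_cases j := two_power_ratio_cases (graded_iso_ypoly_ratio hA hB hpsi hpsiQ (hy j)).
split; [by move=> j; case: (q_cases j) | split; [|split]] => [j | j | q_unit].
- have [_ q_half _] := q_cases j.
  exact: iff_trans q_half (iff_sym (rwP (andPP (negPP (y2coef_evenP hA j)) (y2coef_evenP hB _)))).
- have [_ _ q_two] := q_cases j.
  exact: iff_trans q_two (iff_sym (rwP (andPP (y2coef_evenP hA j) (negPP (y2coef_evenP hB _))))).
- apply: (graded_iso_pontrjagin hA hB (sigma := sigma)) => j.
  have [u [-> u_q]] := graded_iso_y2coef hA hB hpsi hpsiQ (hy j).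
  case: (q_unit j) => qj; [left | right; rewrite -rmorphN -mulrN1z -lin_mpolyMz];
    congr (cls B _); apply: eq_lin_mpoly => i; apply: (@intr_inj rat).
    by rewrite u_q qj mul1r.
  by rewrite u_q qj rmorphM rmorphN1.
Qed.
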